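(* Let $G$ be a graph obtained as a $3$-clique-sum of graphs $G_1$ and $G_2$ along the clique $T=\{x_1,x_2,x_3\}$, and let $G_i'=G\cap G_i$ for $i=1,2$ (i.e. $G_i$ with those edges of $T$ that were deleted in forming $G$ removed). Let $k$ be an integer. Suppose that $G_1'$ has an AT-orientation $D_1'$ with maximum out-degree at most $k$, and that $G_2$ has an AT-orientation $D_2$ with maximum out-degree at most $k$ such that $d^+_{D_2}(x_1)=0$, $d^+_{D_2}(x_2)\leq 1$, $d^+_{D_2}(x_3)\leq 2$, and every out-neighbour in $D_2$ of each vertex of $T$ lies in $T$. Then $G$ has an AT-orientation $D$ with maximum out-degree at most $k$ such that $d^+_D(v)=d^+_{D_1'}(v)$ for every $v\in V(G_1)$.
   Context: Graphs are finite and simple. The clique-sum of graphs $G$ and $H$ each containing a clique of the same size is obtained from their disjoint union by identifying a clique of $G$ with a clique of $H$ of the same size and possibly deleting some edges of the identified clique; a $3$-clique-sum is one where the cliques have at most $3$ vertices. For an orientation $D$, $d^+_D(v)$ is the out-degree of $v$. An Eulerian subgraph of $D$ is a spanning subdigraph $H$ (not necessarily connected, possibly edgeless) with $d^-_H(v)=d^+_H(v)$ for all $v$; $EE(D)$ (resp. $OE(D)$) is the set of Eulerian subgraphs with an even (resp. odd) number of edges; $D$ is an AT-orientation if $|EE(D)|-|OE(D)|\neq 0$. *)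

From mathcomp Require Import all_boot.
Set Implicit Arguments. Unset Strict Implicit. Unset Printing Implicit Defensive.

Section Defs.
Variable V : finType.

Definition simple_graph_on (S : {set V}) (e : rel V) : Prop :=
  [/\ symmetric e, irreflexive e & forall u v, e u v -> (u \in S) && (v \in S)].

Definition restrict (e : rel V) (S : {set V}) : rel V :=
  [rel u v | [&& e u v, u \in S & v \in S]].

Definition is_clique (e : rel V) (T : {set V}) : Prop :=
  forall u v, u \in T -> v \in T -> u != v -> e u v.

Definition is_orientation (e d : rel V) : Prop :=
  (forall u v, d u v -> e u v) /\ (forall u v, e u v -> d u v (+) d v u).

Definition arcs (d : rel V) : {set V * V} := [set a | d a.1 a.2].

Definition outdeg (d : rel V) (v : V) : nat := #|[set w | d v w]|.

(* Spanning Eulerian subdigraph given by its arc set A. *)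
Definition eulerian_sub (d : rel V) (A : {set V * V}) : bool :=
  (A \subset arcs d) &&
  [forall v, #|[set a in A | a.2 == v]| == #|[set a in A | a.1 == v]|].

Definition EE (d : rel V) : {set {set V * V}} :=
  [set A | eulerian_sub d A & ~~ odd #|A|].
Definition OE (d : rel V) : {set {set V * V}} :=
  [set A | eulerian_sub d A & odd #|A|].

Definition AT_orientation (d : rel V) : bool := #|EE d| != #|OE d|.

End Defs.

From mathcomp Require Import all_boot ssralg ssrnum ssrint.
Import GRing.Theory Num.Theory.

(* Glue D1' on V(G1) to D2 outside V(G1).  As D2 has no arc leaving T, no arc
   of the glued orientation D leaves V(G1); a balanced arc set cannot cross a
   cut that arcs cross in one direction only, so |EE| - |OE| is multiplicative
   over such a cut.  Cutting D and D2 at V(G1) gives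
     (|EE D| - |OE D|) (|EE D2[T]| - |OE D2[T]|)
       = (|EE D1'| - |OE D1'|) (|EE D2| - |OE D2|),
   and the out-degree conditions make D2[T] acyclic, so the second factor on
   the left is 1. *)

Set Implicit Arguments.
Unset Strict Implicit.
Unset Printing Implicit Defensive.

Section SignedEulerian.
Variable V : finType.
Implicit Types (d e : rel V) (a : V * V) (A B C : {set V * V}) (S X Y : {set V}).

Definition balanced A :=
  [forall v, #|[set a in A | a.2 == v]| == #|[set a in A | a.1 == v]|].

Lemma eulerian_subE d A : eulerian_sub d A = (A \subset arcs d) && balanced A.
Proof. by []. Qed.

Lemma eulerian_sub0 d : eulerian_sub d set0.
Proof.
rewrite eulerian_subE sub0set; apply/forallP => v.
by rewrite !setIdE !set0I.
Qed.

Lemma eulerian_sub_restrict d X A :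
  eulerian_sub (restrict d X) A = (A \subset setX X X) && eulerian_sub d A.
Proof.
rewrite !eulerian_subE.
have -> : arcs (restrict d X) = setX X X :&: arcs d.
  by apply/setP => a; rewrite !inE andbC.
by rewrite subsetI andbA.
Qed.

Definition pred_closed d X := forall u v, d u v -> v \in X -> u \in X.

Lemma balanced_card_cut X C :
  balanced C -> #|[set a in C | a.2 \in X]| = #|[set a in C | a.1 \in X]|.
Proof.
have card_fibers (f : V * V -> V) :
    #|[set a in C | f a \in X]| = (\sum_(v in X) #|[set a in C | f a == v]|)%N.
  rewrite -sum1dep_card (partition_big f (mem X)) /=; last by move=> a /andP[].
  apply: eq_bigr => v vX; rewrite sum1dep_card; apply: eq_card => a; rewrite !inE.
  by case: eqP => [->|]; rewrite ?vX ?andbT ?andbF.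
by move=> /forallP balC; rewrite !card_fibers; apply: eq_bigr => v _; apply/eqP.
Qed.

Lemma eulerian_sub_split d X C : pred_closed d X -> eulerian_sub d C ->
  C \subset setX X X :|: setX (~: X) (~: X).
Proof.
move=> closedX /andP[/subsetP Cd /(balanced_card_cut X) cardC].
(* Arcs ending in X start in X, and by balance they are as many as the arcs
   starting in X; so the two sets coincide. *)
have /(subset_cardP cardC) same_ends :
    [set a in C | a.2 \in X] \subset [set a in C | a.1 \in X].
  apply/subsetP => a; rewrite !inE => /andP[aC a2X]; rewrite aC.
  by apply: closedX a2X; have := Cd a aC; rewrite inE.
apply/subsetP => a aC.
have : (a \in [set a in C | a.2 \in X]) = (a \in [set a in C | a.1 \in X]).
  by rewrite same_ends.
rewrite !inE aC /= => ->.
by case: (a.1 \in X).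
Qed.

Lemma fiber_setX_notin Y A v (f : V * V -> V) :
  A \subset setX Y Y -> (forall a, a \in setX Y Y -> f a \in Y) -> v \notin Y ->
  [set a in A | f a == v] = set0.
Proof.
move=> /subsetP AY fY vY; apply/setP => a; rewrite !inE.
by apply: contraNF vY => /andP[/AY/fY + /eqP <-].
Qed.

Lemma fiber_setU_in X A B v (f : V * V -> V) :
  B \subset setX (~: X) (~: X) ->
  (forall a, a \in setX (~: X) (~: X) -> f a \in ~: X) -> v \in X ->
  [set a in A :|: B | f a == v] = [set a in A | f a == v].
Proof.
move=> BY fY vX; rewrite !setIdE setIUl -!setIdE (fiber_setX_notin BY fY) ?setU0 //.
by rewrite inE vX.
Qed.

Lemma balancedU X A B : A \subset setX X X -> B \subset setX (~: X) (~: X) ->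
  balanced (A :|: B) = balanced A && balanced B.
Proof.
move=> AX BY.
have fst_in Y a : a \in setX Y Y -> a.1 \in Y by rewrite inE => /andP[].
have snd_in Y a : a \in setX Y Y -> a.2 \in Y by rewrite inE => /andP[].
have AX' : A \subset setX (~: ~: X) (~: ~: X) by rewrite setCK.
have balU v :
    (#|[set a in A :|: B | a.2 == v]| == #|[set a in A :|: B | a.1 == v]|) =
    (#|[set a in A | a.2 == v]| == #|[set a in A | a.1 == v]|) &&
    (#|[set a in B | a.2 == v]| == #|[set a in B | a.1 == v]|).
  have [vX|vNX] := boolP (v \in X).
    have vNY : v \notin ~: X by rewrite inE vX.
    rewrite !(fiber_setU_in _ BY (snd_in _) vX) !(fiber_setU_in _ BY (fst_in _) vX).
    rewrite (fiber_setX_notin BY (snd_in _) vNY) (fiber_setX_notin BY (fst_in _) vNY).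
    by rewrite cards0 eqxx andbT.
  have vY : v \in ~: X by rewrite inE.
  rewrite setUC !(fiber_setU_in _ AX' (snd_in _) vY) !(fiber_setU_in _ AX' (fst_in _) vY).
  rewrite (fiber_setX_notin AX (snd_in _) vNX) (fiber_setX_notin AX (fst_in _) vNX).
  by rewrite cards0.
apply/forallP/andP => [balAB|[/forallP balA /forallP balB] v].
  by split; apply/forallP => v; have := balAB v; rewrite balU => /andP[].
by rewrite balU balA balB.
Qed.

Lemma eulerian_subU d X A B : A \subset setX X X -> B \subset setX (~: X) (~: X) ->
  eulerian_sub d (A :|: B) = eulerian_sub d A && eulerian_sub d B.
Proof.
move=> AX BY; rewrite !eulerian_subE subUset (balancedU AX BY).
by case: (A \subset _); case: (B \subset _); rewrite ?andbF.
Qed.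

Lemma disjoint_setX_setC X : [disjoint setX X X & setX (~: X) (~: X)].
Proof.
rewrite -setI_eq0; apply/eqP/setP => a; rewrite !inE.
by case: (a.1 \in X); rewrite ?andbF.
Qed.

Lemma eulerian_sub_ranked d (f : V -> nat) A :
  (forall u v, d u v -> f v < f u) -> eulerian_sub d A -> A = set0.
Proof.
move=> ranked /andP[/subsetP Ad /forallP balA]; apply/setP => a0; rewrite inE.
(* A tail of maximal rank has an in-arc, and the tail of that arc has larger rank. *)
apply/negP => a0A; case: (arg_maxnP (fun a => f a.1) a0A) => a aA max_a.
have /card_gt0P[b] : 0 < #|[set b in A | b.2 == a.1]|.
  by rewrite (eqP (balA a.1)); apply/card_gt0P; exists a; rewrite inE eqxx andbT.
rewrite inE => /andP[bA /eqP b2a1]; have := Ad b bA; rewrite inE => /ranked.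
by rewrite b2a1 ltnNge; case/negP; exact: max_a.
Qed.

Local Open Scope ring_scope.

Definition signed_eulerian d : int := \sum_(A | eulerian_sub d A) (-1) ^+ #|A|.

Lemma signed_eulerianE d : signed_eulerian d = #|EE d|%:Z - #|OE d|%:Z.
Proof.
rewrite /signed_eulerian (bigID (fun A => odd #|A|)) /= addrC.
have -> : \sum_(A | eulerian_sub d A && ~~ odd #|A|) (-1) ^+ #|A| =
    \sum_(A in EE d) (1 : int).
  apply: eq_big => [A|A /andP[_ /negbTE evenA]]; first by rewrite inE.
  by rewrite -signr_odd evenA.
have -> : \sum_(A | eulerian_sub d A && odd #|A|) (-1) ^+ #|A| =
    \sum_(A in OE d) (-1 : int).
  apply: eq_big => [A|A /andP[_ oddA]]; first by rewrite inE.
  by rewrite -signr_odd oddA.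
by rewrite !sumr_const mulNrn !natz.
Qed.

Lemma AT_orientationE d : AT_orientation d = (signed_eulerian d != 0).
Proof. by rewrite signed_eulerianE subr_eq0 eqz_nat. Qed.

Lemma eq_signed_eulerian d d' : d =2 d' -> signed_eulerian d = signed_eulerian d'.
Proof.
move=> eq_d; apply: eq_bigl => A; rewrite !eulerian_subE.
suff -> : arcs d = arcs d' by [].
by apply/setP => a; rewrite !inE eq_d.
Qed.

Lemma signed_eulerianM d X : pred_closed d X ->
  signed_eulerian d = signed_eulerian (restrict d X) * signed_eulerian (restrict d (~: X)).
Proof.
move=> closedX; set XX := setX X X; set YY := setX (~: X) (~: X).
have disjXY : [disjoint XX & YY] := disjoint_setX_setC X.
have splitE A B : (((A :|: B) :&: XX, (A :|: B) :&: YY) == (A, B)) =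
    (A \subset XX) && (B \subset YY).
  apply/eqP/andP => [[<- <-]|[AX BY]]; first by rewrite !subsetIr.
  rewrite !setIUl (setIidPl AX) (setIidPl BY).
  rewrite (disjoint_setI0 (disjointWl AX disjXY)) set0U.
  by rewrite disjoint_sym in disjXY; rewrite (disjoint_setI0 (disjointWl BY disjXY)) setU0.
rewrite /signed_eulerian big_distrlr /= pair_big_dep /=.
rewrite (reindex_onto (fun p => p.1 :|: p.2) (fun C => (C :&: XX, C :&: YY))) /=;
  last first.
  by move=> C /(eulerian_sub_split closedX) CXY; rewrite -setIUr; apply/setIidPl.
apply: eq_big => [[A B]|[A B]] /=; rewrite splitE.
  rewrite !eulerian_sub_restrict.
  case AX: (A \subset XX); case BY: (B \subset YY); rewrite /= ?andbF //.
  by rewrite (eulerian_subU _ AX BY) andbT.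
case/andP=> _ /andP[AX BY].
by rewrite cardsU (disjoint_setI0 (disjointW AX BY disjXY)) cards0 subn0 exprD.
Qed.

Lemma signed_eulerian_ranked d (f : V -> nat) :
  (forall u v, d u v -> f v < f u)%N -> signed_eulerian d = 1.
Proof.
move=> ranked; rewrite /signed_eulerian (big_pred1 set0) ?cards0 // => A.
apply/idP/eqP => [/(eulerian_sub_ranked ranked) //|->]; exact: eulerian_sub0.
Qed.

Lemma signed_eulerian_triangle e d (x1 x2 x3 : V) :
  x1 != x2 -> x1 != x3 -> x2 != x3 -> irreflexive e ->
  is_clique e [set x1; x2; x3] -> is_orientation e d ->
  outdeg d x1 = 0%N -> (outdeg d x2 <= 1)%N ->
  signed_eulerian (restrict d [set x1; x2; x3]) = 1.
Proof.
move=> n12 n13 n23 irr_e cl [de ed] out1 out2.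
have irr u : d u u = false by apply/negP => /de; rewrite irr_e.
have sink1 w : d x1 w = false.
  by apply/negP => dw; move/cards0_eq/setP/(_ w): out1; rewrite !inE dw.
have e21 : (x2 == x1) = false by rewrite eq_sym (negbTE n12).
have e31 : (x3 == x1) = false by rewrite eq_sym (negbTE n13).
have e32 : (x3 == x2) = false by rewrite eq_sym (negbTE n23).
have d21 : d x2 x1.
  by have := ed x2 x1; rewrite sink1 addbF; apply; apply: cl; rewrite ?e21 ?inE ?eqxx ?orbT.
have n23d : d x2 x3 = false.
  apply: contraTF out2 => d23; rewrite -ltnNge.
  have <- : #|[set x1; x3]| = 2%N by rewrite cards2 n13.
  by apply: subset_leq_card; apply/subsetP => w; rewrite !inE => /orP[]/eqP->.
pose rank v := (if v == x1 then 0 else if v == x2 then 1 else 2)%N.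
apply: (@signed_eulerian_ranked _ rank).
move=> u v /and3P[duv]; rewrite !inE -!orbA.
move=> /or3P[]/eqP eu /or3P[]/eqP ev; subst u v; rewrite /rank ?eqxx ?e21 ?e31 ?e32 //.
all: by rewrite ?irr ?sink1 ?n23d in duv.
Qed.

Lemma restrict_setI d S S' : (forall u v, d u v -> (u \in S') && (v \in S')) ->
  restrict d S =2 restrict d (S :&: S').
Proof.
move=> dS' u v; rewrite /restrict /= !inE.
by case duv: (d u v) => //=; case/andP: (dS' _ _ duv) => -> ->; rewrite !andbT.
Qed.

Definition glue S (d1 d2 : rel V) : rel V :=
  fun u v => if (u \in S) && (v \in S) then d1 u v else d2 u v.

Lemma glue_orientation S e (e2 d1 d2 : rel V) :
  (forall u v, ~~ ((u \in S) && (v \in S)) -> e u v = e2 u v) ->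
  is_orientation (restrict e S) d1 -> is_orientation e2 d2 ->
  is_orientation e (glue S d1 d2).
Proof.
move=> e_off [d1e e1d1] [d2e e2d2]; split=> u v; rewrite /glue.
  case: ifP => [_ /d1e /and3P[] //|uvS /d2e].
  by rewrite e_off ?uvS.
rewrite [(v \in S) && _]andbC; case: ifP => uvS euv.
  by apply: e1d1; rewrite /restrict /= euv.
by apply: e2d2; rewrite -e_off ?uvS.
Qed.

Lemma outdeg_glue_in S (d1 d2 : rel V) v :
  (forall u w, d1 u w -> (u \in S) && (w \in S)) ->
  (forall u w, d2 u w -> u \in S -> w \in S) ->
  v \in S -> outdeg (glue S d1 d2) v = outdeg d1 v.
Proof.
move=> d1S d2S vS; apply: eq_card => w; rewrite !inE /glue vS /=.
case: (boolP (w \in S)) => // wNS.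
rewrite (contraNF (@d2S v w ^~ vS) wNS); apply/esym/negP => /d1S/andP[_ wS].
by rewrite wS in wNS.
Qed.

Lemma outdeg_glue_out S (d1 d2 : rel V) v :
  v \notin S -> outdeg (glue S d1 d2) v = outdeg d2 v.
Proof. by move=> vNS; apply: eq_card => w; rewrite !inE /glue (negbTE vNS). Qed.

Lemma signed_eulerian_glue S (d1 d2 : rel V) :
  (forall u v, d1 u v -> (u \in S) && (v \in S)) ->
  (forall u v, d2 u v -> u \in S -> v \in S) ->
  signed_eulerian (glue S d1 d2) * signed_eulerian (restrict d2 S) =
  signed_eulerian d1 * signed_eulerian d2.
Proof.
move=> d1S d2S.
have closedC d : (forall u v, d u v -> u \in S -> v \in S) -> pred_closed d (~: S).
  by move=> dS u v duv; rewrite !inE; apply: contra (dS u v duv).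
have glueS u v : glue S d1 d2 u v -> u \in S -> v \in S.
  by rewrite /glue; case: ifP => [/andP[_ ->] //|_ /d2S].
rewrite (signed_eulerianM (closedC _ glueS)) (signed_eulerianM (closedC _ d2S)) setCK.
have -> : signed_eulerian (restrict (glue S d1 d2) S) = signed_eulerian d1.
  apply: eq_signed_eulerian => u v; rewrite /restrict /glue /=.
  case: ifP => [|uvS]; rewrite ?andbT ?andbF //.
  by apply/esym/negbTE; apply: contraFN uvS; apply: d1S.
have -> : signed_eulerian (restrict (glue S d1 d2) (~: S)) =
    signed_eulerian (restrict d2 (~: S)).
  apply: eq_signed_eulerian => u v; rewrite /restrict /glue /= !inE.
  by case: (u \in S); rewrite /= ?andbF.
by rewrite mulrAC mulrC.
Qed.

End SignedEulerian.

Theorem lemma2p4 (V : finType) (S1 S2 : {set V}) (x1 x2 x3 : V)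
    (e1 e2 e : rel V) (k : nat) (d1 d2 : rel V) :
  x1 != x2 -> x1 != x3 -> x2 != x3 ->
  S1 :&: S2 = [set x1; x2; x3] ->
  S1 :|: S2 = [set: V] ->
  simple_graph_on S1 e1 -> simple_graph_on S2 e2 ->
  is_clique e1 [set x1; x2; x3] -> is_clique e2 [set x1; x2; x3] ->
  simple_graph_on [set: V] e ->
  (forall u v, e u v -> e1 u v || e2 u v) ->
  (forall u v, ~~ ((u \in [set x1; x2; x3]) && (v \in [set x1; x2; x3])) ->
     e1 u v || e2 u v -> e u v) ->
  is_orientation (restrict e S1) d1 -> AT_orientation d1 ->
  (forall v, outdeg d1 v <= k) ->
  is_orientation e2 d2 -> AT_orientation d2 ->
  (forall v, outdeg d2 v <= k) ->
  outdeg d2 x1 = 0 -> outdeg d2 x2 <= 1 -> outdeg d2 x3 <= 2 ->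
  (forall t w, t \in [set x1; x2; x3] -> d2 t w -> w \in [set x1; x2; x3]) ->
  exists d : rel V,
    [/\ is_orientation e d, AT_orientation d,
        (forall v, outdeg d v <= k) &
        (forall v, v \in S1 -> outdeg d v = outdeg d1 v)].
Proof.
move=> n12 n13 n23 S1S2 _ [_ _ e1S1] [_ irr2 e2S2] _ cl2 _ e_e12 e12_e
  o1 AT1 deg1 o2 AT2 deg2 out1 out2 _ T_out.
set T := [set x1; x2; x3] in S1S2 cl2 e12_e T_out *.
have TS1 : T \subset S1 by rewrite -S1S2 subsetIl.
have d1S u v : d1 u v -> (u \in S1) && (v \in S1) by case: o1 => d1e _ /d1e/and3P[_ -> ->].
have d2S2 u v : d2 u v -> (u \in S2) && (v \in S2) by case: o2 => d2e _ /d2e/e2S2.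
have d2S1 u v : d2 u v -> u \in S1 -> v \in S1.
  move=> duv uS1; apply/(subsetP TS1)/(T_out u) => //.
  by rewrite -S1S2 inE uS1; case/andP: (d2S2 _ _ duv).
have e_off u v : ~~ ((u \in S1) && (v \in S1)) -> e u v = e2 u v.
  move=> uvS; apply/idP/idP => [/e_e12/orP[/e1S1|//]|e2uv]; first by rewrite (negbTE uvS).
  apply: e12_e; last by rewrite e2uv orbT.
  by apply: contra uvS => /andP[uT vT]; rewrite !(subsetP TS1).
exists (glue S1 d1 d2); split.
- exact: glue_orientation e_off o1 o2.
- rewrite AT_orientationE -(mulr1 (signed_eulerian _)).
  rewrite -(signed_eulerian_triangle n12 n13 n23 irr2 cl2 o2 out1 out2) -/T -S1S2.
  rewrite -(eq_signed_eulerian (restrict_setI S1 d2S2)) signed_eulerian_glue //.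
  by rewrite mulf_neq0 // -AT_orientationE.
- move=> v; have [vS1|vNS1] := boolP (v \in S1).
    by rewrite outdeg_glue_in.
  by rewrite outdeg_glue_out.
- by move=> v vS1; rewrite outdeg_glue_in.
Qed.
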